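(* Under the utility optimization algorithm described in the context, with initial conditions $Q_a^b(0)=0$ and $E_{[a,c]}(0)=0$, for all nodes $a,b$, all links $l_{[a,c]}\in\mathcal{L}$ and all time slots $t\ge 0$: $$0\le Q_a^b(t)\le \beta V+R_{max},\qquad 0\le E_{[a,c]}(t)\le \theta_{[a,c]}+K_{max}.$$
   Context: Network: a graph $G=(\mathcal{N},\mathcal{L})$ with directed links $l_{[a,c]}$; $\mathcal{N}_a^{in}$ ($\mathcal{N}_a^{out}$) is the set of nodes with a link into (out of) $a$; $d_{max}=\max_a\max(|\mathcal{N}_a^{in}|,|\mathcal{N}_a^{out}|)$. Time is slotted, $t=0,1,2,\dots$. For each link: $K_{[a,c]}\le K_{max}$ is the key generated per slot when QKD is on; $S_{[a,c]}(t)\in\{0,1\}$ the on/off decision; $P_{[a,c]}(t)\in[0,P_{max}]$ the key consumed; $E_{[a,c]}(t)$ the key stored, with $E_{[a,c]}(t+1)=E_{[a,c]}(t)-P_{[a,c]}(t)+S_{[a,c]}(t)K_{[a,c]}$ and the constraint $E_{[a,c]}(t)\ge P_{[a,c]}(t)$. The transmission rate is $\mu_{[a,c]}(t)=\mu_{[a,c]}(P_{[a,c]}(t))\le\mu_{max}$, with a constant $\delta>0$ such that $\mu_{[a,c]}(P)\le\delta P$; it is split as $\mu_{[a,c]}(t)=\sum_b\mu^b_{[a,c]}(t)$ over data types (type-$b$ = destined to $b$). $Q_a^b(t)$ is the type-$b$ queue at $a$, $R_a^b(t)\in[0,R_{max}]$ the admitted new type-$b$ data at $a$, with $Q_a^b(t+1)=Q_a^b(t)+R_a^b(t)+\sum_{c\in\mathcal{N}_a^{in}}\mu^b_{[c,a]}(t)-\sum_{c\in\mathcal{N}_a^{out}}\mu^b_{[a,c]}(t)$.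 Utilities $U_a^b$ are concave nondecreasing; $\beta=\max_{a,b}(U_a^b)'(0)$. $V>0$ is a parameter; $\gamma=R_{max}+d_{max}\mu_{max}$; $\theta_{[a,c]}=\delta\beta V+P_{max}$. Weights: $W^b_{[a,c]}(t)=\max(Q_a^b(t)-Q_c^b(t)-\gamma,0)$, $W_{[a,c]}(t)=\max_bW^b_{[a,c]}(t)$. Algorithm, each slot $t$: (1) set $S_{[a,c]}(t)=1$ if $E_{[a,c]}(t)<\theta_{[a,c]}$, else $0$; (2) choose $R_a^b(t)\in[0,R_{max}]$ maximizing $VU_a^b(R)-Q_a^b(t)R$; (3) choose $\vec P(t)$ maximizing $\sum_{l_{[a,c]}\in\mathcal{L}}\{\mu_{[a,c]}(P_{[a,c]})W_{[a,c]}(t)+(E_{[a,c]}(t)-\theta_{[a,c]})P_{[a,c]}\}$ subject to $E_{[a,c]}(t)\ge P_{[a,c]}$; (4) pick $b^*\in\arg\max_bW^b_{[a,c]}(t)$ and, if $W^{b^*}_{[a,c]}(t)>0$, set $\mu^{b^*}_{[a,c]}(t)=\mu_{[a,c]}(t)$ (all other types get zero on that link); (5) update queues and key storage by the dynamics above. *)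

From mathcomp Require Import all_boot.
From Stdlib Require Import Reals.

Set Implicit Arguments.
Unset Strict Implicit.
Unset Printing Implicit Defensive.

Notation "\rsum_ ( i | P ) F" := (\big[Rplus/0%R]_(i | P) F)
  (at level 41, F at level 41, i at level 50).

(* d_max = max_a max(|N_a^in|, |N_a^out|), for the directed link relation L
   (L a c  <->  there is a link l_[a,c]). *)
Definition d_max (N : finType) (L : rel N) : nat :=
  \max_(a : N) maxn #|[pred c | L c a]| #|[pred c | L a c]|.

Open Scope R_scope.

Definition concave_nonneg (U : R -> R) : Prop :=
  forall x y l, 0 <= x -> 0 <= y -> 0 <= l <= 1 ->
    l * U x + (1 - l) * U y <= U (l * x + (1 - l) * y).

Definition nondecr_nonneg (U : R -> R) : Prop :=
  forall x y, 0 <= x -> x <= y -> U x <= U y.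

Definition deriv_at0 (U : R -> R) (d : R) : Prop :=
  forall eps, 0 < eps -> exists delta, 0 < delta /\
    forall h, 0 < h < delta -> Rabs ((U h - U 0) / h - d) < eps.

Definition gammaC (Rmax mumax : R) (dmax : nat) : R := Rmax + INR dmax * mumax.

Definition thetaC (delta beta V Pmax : R) : R := delta * beta * V + Pmax.

Definition Wb (N : finType) (gamma : R) (Q : N -> N -> R) (a c b : N) : R :=
  Rmax (Q a b - Q c b - gamma) 0.

(* W_[a,c](t) = max_b W^b_[a,c](t)  (all W^b >= 0, so 0 is a valid base). *)
Definition Wl (N : finType) (gamma : R) (Q : N -> N -> R) (a c : N) : R :=
  \big[Rmax/0]_(b : N) Wb gamma Q a c b.

Definition objP (N : finType) (L : rel N) (mu : N -> N -> R -> R)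
    (W E : N -> N -> R) (theta : R) (P : N -> N -> R) : R :=
  \rsum_(a | true) \rsum_(c | L a c)
     (mu a c (P a c) * W a c + (E a c - theta) * P a c).

From mathcomp Require Import all_boot.
From Stdlib Require Import Reals.
Open Scope R_scope.
From Stdlib Require Import Lra Classical.

(* The induction step is reduced to two purely numerical one-slot lemmas:
   - [key_step_bounds]: key generation is switched on only below theta, so
     E stays in [0, theta + Kmax]; consumption never exceeds the store.
   - [queue_step_bounds]: a queue receives type-b data only from a neighbour
     whose backlog exceeds it by more than gamma = Rmax + d_max * mu_max,
     and sends type-b data only to a neighbour it exceeds by more than gamma;
     since at most gamma arrives and at most d_max * mu_max leaves per slot,
     Q stays in [0, beta V + Rmax] provided admission stops above beta V. *)

(* A nondecreasing function has a nonnegative derivative at 0; this gives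
   beta >= 0, hence theta >= 0. *)
Lemma deriv_at0_nonneg {U : R -> R} {d : R} :
  nondecr_nonneg U -> deriv_at0 U d -> 0 <= d.
Proof.
move=> Umon Ud; apply: Rnot_lt_le => d_neg.
have [de [de_pos Hde]] := Ud (- d) ltac:(lra).
have slope_ge0 : 0 <= (U (de / 2) - U 0) / (de / 2).
  have := Umon 0 (de / 2) ltac:(lra) ltac:(lra).
  move=> Hle; apply: Rmult_le_pos; first lra.
  by apply/Rlt_le/Rinv_0_lt_compat; lra.
have := Hde (de / 2) ltac:(lra).
rewrite Rabs_right; lra.
Qed.

(* Tangent-line bound: a concave function on [0, +oo) lies below its
   tangent at 0.  If a secant slope from 0 exceeded U'(0), concavity would
   force all shorter secant slopes to exceed it too, contradicting the
   derivative. *)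
Lemma concave_tangent_bound {U : R -> R} {d : R} :
  concave_nonneg U -> deriv_at0 U d -> forall r, 0 <= r -> U r - U 0 <= d * r.
Proof.
move=> Uconc Ud r r_ge0.
have [->|r_pos] : r = 0 \/ 0 < r by lra.
  by rewrite Rmult_0_r; lra.
apply: Rnot_lt_le => Hlt.
set s := (U r - U 0) / r.
have ds : d < s.
  apply: (Rmult_lt_reg_r r) => //.
  by rewrite /s /Rdiv Rmult_assoc Rinv_l; lra.
have [de [de_pos Hde]] := Ud (s - d) ltac:(lra).
set h := Rmin r de / 2.
have h_pos : 0 < h by rewrite /h; have := Rmin_pos r de r_pos de_pos; lra.
have h_de : h < de by rewrite /h; have := Rmin_r r de; lra.
have h_r : h < r by rewrite /h; have := Rmin_l r de; lra.
have chord : h / r * U r + (1 - h / r) * U 0 <= U h.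
  have lam : 0 <= h / r <= 1.
    split; first by apply: Rmult_le_pos; [lra | apply/Rlt_le/Rinv_0_lt_compat].
    by apply: (Rmult_le_reg_r r) => //; rewrite /Rdiv Rmult_assoc Rinv_l; lra.
  have := Uconc r 0 (h / r) ltac:(lra) ltac:(lra) lam.
  by have -> : h / r * r + (1 - h / r) * 0 = h by field; lra.
have short_slope : s <= (U h - U 0) / h.
  apply: (Rmult_le_reg_r h) => //.
  rewrite /Rdiv Rmult_assoc Rinv_l; last lra.
  have : h / r * U r + (1 - h / r) * U 0 = U 0 + h * s by rewrite /s; field; lra.
  lra.
have := Hde h ltac:(lra).
rewrite Rabs_right; lra.
Qed.

Lemma admission_vanishes {U : R -> R} {d V q r : R} :
  concave_nonneg U -> deriv_at0 U d -> 0 <= V -> V * d < q -> 0 <= r ->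
  V * U 0 - q * 0 <= V * U r - q * r -> r = 0.
Proof.
move=> Uconc Ud V_ge0 q_big r_ge0 r_opt.
have tangent : V * (U r - U 0) <= V * (d * r).
  by apply: Rmult_le_compat_l => //; exact: concave_tangent_bound.
nra.
Qed.

Lemma rsum_bounds (T : finType) (P : pred T) (f : T -> R) (m : R) :
  (forall i, P i -> 0 <= f i <= m) ->
  0 <= \rsum_(i | P i) f i <= INR #|P| * m.
Proof.
move=> f_bnd.
have seq_bound s : 0 <= \big[Rplus/0]_(i <- s | P i) f i <= INR (count P s) * m.
  elim: s => [|x s IH]; first by rewrite big_nil /=; lra.
  rewrite big_cons /=; case Px: (P x).
  - by rewrite add1n S_INR; have := f_bnd x Px; lra.
  - by rewrite add0n.
by rewrite cardE /enum_mem size_filter; exact: seq_bound.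
Qed.

Lemma rsum_neq0 (T : finType) (P : pred T) (f : T -> R) :
  \rsum_(i | P i) f i <> 0 -> exists i, P i /\ f i <> 0.
Proof.
move=> sum_neq0; apply: NNPP => no_term; apply: sum_neq0.
apply: (big_ind (fun x => x = 0)) => [|x y -> ->|i Pi]; first by [].
- by rewrite Rplus_0_r.
- by apply: NNPP => fi_neq0; apply: no_term; exists i.
Qed.

Lemma in_degree_le_dmax (N : finType) (L : rel N) (a : N) :
  (#|[pred c | L c a]| <= d_max L)%nat.
Proof.
apply: leq_trans (leq_maxl _ #|[pred c | L a c]|) _ => /=.
exact: (leq_bigmax (F := fun a => maxn #|[pred c | L c a]| #|[pred c | L a c]|)).
Qed.

Lemma out_degree_le_dmax (N : finType) (L : rel N) (a : N) :
  (#|[pred c | L a c]| <= d_max L)%nat.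
Proof.
apply: leq_trans (leq_maxr #|[pred c | L c a]| _) _.
exact: (leq_bigmax (F := fun a => maxn #|[pred c | L c a]| #|[pred c | L a c]|)).
Qed.

Lemma routed_rate {N : finType} {g mumax mu_ac : R} {q : N -> N -> R}
    {a c bs : N} {rate : N -> R} :
  0 <= mu_ac <= mumax ->
  (forall b, rate b = if b == bs then
                (if Rlt_dec 0 (Wb g q a c bs) then mu_ac else 0) else 0) ->
  forall b, 0 <= rate b <= mumax /\ (rate b <> 0 -> q c b + g < q a b).
Proof.
move=> mu_bnd rule b; rewrite rule.
have [-> | _] := eqVneq b bs; last by split; [lra | done].
case: (Rlt_dec 0 (Wb g q a c bs)) => [W_pos | W_nonpos] /=.
  2: by split; [lra | done].
split=> // _; move: W_pos; rewrite /Wb /Rmax.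
by case: (Rle_dec _ 0) => _; lra.
Qed.

Section Flows.
Context {N : finType} {L : rel N} {g mumax : R}.
Context {q : N -> N -> R} {rate : N -> N -> N -> R}.
Hypothesis mumax_ge0 : 0 <= mumax.
Hypothesis rate_ok : forall a c b, L a c ->
  0 <= rate a c b <= mumax /\ (rate a c b <> 0 -> q c b + g < q a b).

Lemma inflow_bounds (a b : N) :
  0 <= \rsum_(c | L c a) rate c a b <= INR (d_max L) * mumax.
Proof.
have := @rsum_bounds N [pred c | L c a] (fun c => rate c a b) mumax.
case=> [c Lc|lo hi]; first exact: proj1 (rate_ok c a b Lc).
split=> //; apply: Rle_trans hi _; apply: Rmult_le_compat_r => //.
exact/le_INR/leP/in_degree_le_dmax.
Qed.

Lemma outflow_bounds (a b : N) :
  0 <= \rsum_(c | L a c) rate a c b <= INR (d_max L) * mumax.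
Proof.
have := @rsum_bounds N [pred c | L a c] (fun c => rate a c b) mumax.
case=> [c Lc|lo hi]; first exact: proj1 (rate_ok a c b Lc).
split=> //; apply: Rle_trans hi _; apply: Rmult_le_compat_r => //.
exact/le_INR/leP/out_degree_le_dmax.
Qed.

Lemma inflow_source (a b : N) :
  \rsum_(c | L c a) rate c a b <> 0 -> exists c, q a b + g < q c b.
Proof.
case/rsum_neq0=> c [Lc rate_neq0].
by exists c; exact: (proj2 (rate_ok c a b Lc) rate_neq0).
Qed.

Lemma outflow_target (a b : N) :
  \rsum_(c | L a c) rate a c b <> 0 -> exists c, q c b + g < q a b.
Proof.
case/rsum_neq0=> c [Lc rate_neq0].
by exists c; exact: (proj2 (rate_ok a c b Lc) rate_neq0).
Qed.

End Flows.

(* With gamma >= Rmax + D, where D bounds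
   both the inflow and the outflow, the interval [0, T + Rmax] is invariant
   as long as admission stops above the threshold T: data arrives only from
   a larger queue (so the new backlog stays below that queue) and leaves only
   towards a smaller nonnegative one (so at least gamma >= D remains). *)
Lemma queue_step_bounds (T Rmax D g q r inflow outflow : R) :
  Rmax + D <= g -> 0 <= q <= T + Rmax -> 0 <= r <= Rmax -> (T < q -> r = 0) ->
  0 <= inflow <= D -> 0 <= outflow <= D ->
  (inflow <> 0 -> exists x, x <= T + Rmax /\ q + g < x) ->
  (outflow <> 0 -> exists x, 0 <= x /\ x + g < q) ->
  0 <= q + r + inflow - outflow <= T + Rmax.
Proof.
move=> g_big q_bnd r_bnd r_stop in_bnd out_bnd in_src out_tgt; split.
- have [->|/out_tgt [x [x_ge0 x_lt]]] := Req_dec outflow 0; lra.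
- have [in0|/in_src [x [x_le x_gt]]] := Req_dec inflow 0; last lra.
  have [q_small|/r_stop r0] := Rle_lt_dec q T; lra.
Qed.

Lemma key_step_bounds (theta Kmax e p k : R) (on : bool) :
  0 <= e <= theta + Kmax -> 0 <= p <= e -> 0 <= k <= Kmax ->
  (on = true <-> e < theta) ->
  0 <= e - p + (if on then k else 0) <= theta + Kmax.
Proof.
move=> e_bnd p_bnd k_bnd on_iff.
case: on on_iff => [[on_lt _]|[_ off]]; first by have := on_lt erefl; lra.
have : ~ e < theta by move/off.
lra.
Qed.

Theorem lemma1
  (N : finType) (L : rel N)
  (* link parameters *)
  (K : N -> N -> R) (Kmax Pmax mumax Rmax delta V beta : R)
  (mu : N -> N -> R -> R)
  (* utilities and their derivatives at 0 *)
  (U : N -> N -> R -> R) (dU : N -> N -> R)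
  (* a trajectory of the algorithm *)
  (Q : nat -> N -> N -> R) (E : nat -> N -> N -> R) (Son : nat -> N -> N -> bool)
  (P : nat -> N -> N -> R) (Rin : nat -> N -> N -> R)
  (mub : nat -> N -> N -> N -> R)
  (* standing assumptions *)
  (HK : forall a c, L a c -> 0 <= K a c <= Kmax)
  (HPmax : 0 <= Pmax) (HRmax : 0 <= Rmax) (Hmumax : 0 <= mumax)
  (Hdelta : 0 < delta) (HV : 0 < V)
  (Hmu : forall a c p, L a c -> 0 <= p <= Pmax ->
           0 <= mu a c p <= mumax /\ mu a c p <= delta * p)
  (HUconc : forall a b, concave_nonneg (U a b))
  (HUmon : forall a b, nondecr_nonneg (U a b))
  (HdU : forall a b, deriv_at0 (U a b) (dU a b))
  (Hbeta : (forall a b, dU a b <= beta) /\ (exists a b, dU a b = beta))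
  (* initial conditions *)
  (HQ0 : forall a b, Q 0%nat a b = 0)
  (HE0 : forall a c, L a c -> E 0%nat a c = 0)
  (* (1) QKD on/off decision *)
  (HS : forall t a c, L a c ->
          (Son t a c = true <-> E t a c < thetaC delta beta V Pmax))
  (* (2) admission control *)
  (HR : forall t a b, 0 <= Rin t a b <= Rmax /\
          forall r, 0 <= r <= Rmax ->
            V * U a b r - Q t a b * r <= V * U a b (Rin t a b) - Q t a b * Rin t a b)
  (* (3) key consumption *)
  (HP : forall t,
          (forall a c, L a c -> 0 <= P t a c <= Pmax /\ P t a c <= E t a c) /\
          forall P' : N -> N -> R,
            (forall a c, L a c -> 0 <= P' a c <= Pmax /\ P' a c <= E t a c) ->
            objP L mu (Wl (gammaC Rmax mumax (d_max L)) (Q t)) (E t)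
                 (thetaC delta beta V Pmax) P'
            <= objP L mu (Wl (gammaC Rmax mumax (d_max L)) (Q t)) (E t)
                 (thetaC delta beta V Pmax) (P t))
  (* (4) routing: all rate of the link to one type b* maximizing W^b *)
  (Hroute : forall t a c, L a c -> exists bs : N,
          (forall b, Wb (gammaC Rmax mumax (d_max L)) (Q t) a c b
                     <= Wb (gammaC Rmax mumax (d_max L)) (Q t) a c bs) /\
          (forall b, mub t a c b =
             if b == bs then
               (if Rlt_dec 0 (Wb (gammaC Rmax mumax (d_max L)) (Q t) a c bs)
                then mu a c (P t a c) else 0)
             else 0))
  (* (5) dynamics *)
  (HQdyn : forall t a b,
          Q t.+1 a b = Q t a b + Rin t a b
                        + \rsum_(c | L c a) mub t c a b
                        - \rsum_(c | L a c) mub t a c b)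
  (HEdyn : forall t a c, L a c ->
          E t.+1 a c = E t a c - P t a c + (if Son t a c then K a c else 0))
  : forall t : nat,
      (forall a b, 0 <= Q t a b <= beta * V + Rmax) /\
      (forall a c, L a c -> 0 <= E t a c <= thetaC delta beta V Pmax + Kmax).
Proof.
set g := gammaC Rmax mumax (d_max L).
have [dU_le [a0 [b0 dU_beta]]] := Hbeta.
have beta_ge0 : 0 <= beta.
  by rewrite -dU_beta; exact: deriv_at0_nonneg (HUmon a0 b0) (HdU a0 b0).
have theta_ge0 : 0 <= thetaC delta beta V Pmax.
  by rewrite /thetaC; have := Rmult_le_pos _ _ beta_ge0 (Rlt_le _ _ HV); nra.
have rate_ok t a c b : L a c ->
    0 <= mub t a c b <= mumax /\ (mub t a c b <> 0 -> Q t c b + g < Q t a b).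
  move=> Lac; have [bs [_ rule]] := Hroute t a c Lac.
  apply: (routed_rate _ rule).
  exact: proj1 (Hmu a c _ Lac (proj1 (proj1 (HP t) a c Lac))).
elim=> [|t [IHQ IHE]].
  split=> [a b | a c Lac]; first by rewrite HQ0; nra.
  by rewrite HE0 //; have := HK a c Lac; lra.
split=> [a b | a c Lac].
- have [R_bnd R_opt] := HR t a b.
  rewrite HQdyn; apply: (@queue_step_bounds _ Rmax (INR (d_max L) * mumax) g).
  + by rewrite /g /gammaC; lra.
  + exact: IHQ.
  + exact: R_bnd.
  + move=> Q_big; apply: (admission_vanishes (HUconc a b) (HdU a b)
                             (Rlt_le _ _ HV) _ (proj1 R_bnd) (R_opt 0 _)).
    * by have := dU_le a b; nra.
    * lra.
  + exact: (inflow_bounds Hmumax (rate_ok t) a b).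
  + exact: (outflow_bounds Hmumax (rate_ok t) a b).
  + case/(inflow_source (rate_ok t))=> c Q_lt; exists (Q t c b).
    by have := IHQ c b; lra.
  + case/(outflow_target (rate_ok t))=> c Q_gt; exists (Q t c b).
    by have := IHQ c b; lra.
- rewrite HEdyn //; apply: key_step_bounds (HS t a c Lac).
  + exact: IHE.
  + by have [[P_ge0 _] P_le] := proj1 (HP t) a c Lac.
  + exact: HK.
Qed.
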